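(* Consider a many-sorted first-order vocabulary with sorts $U_a, U_b$, binary relation symbols $R_a$ of type $U_a \times U_b$ and $R_b$ of type $U_b \times U_a$, a constant $c$ of sort $U_a$, and a unary predicate $p$ on sort $U_a$. Assume the regular sequents (A1) $R_a(c,y) \wedge R_b(y,x) \vdash_{\{x,y\}} p(x)$, (A2) $R_a(c,y) \wedge p(x) \vdash_{\{x,y\}} R_b(y,x)$, (A3) $\vdash \exists y.\, R_a(c,y)$, where $x$ has sort $U_a$ and $y$ has sort $U_b$. Let $q(x) \equiv \exists y.\,[R_a(x,y) \wedge R_b(y,x)]$. Then from (A1)–(A3) one can infer, in regular logic, the sequents (F1) $p(c) \vdash q(c)$ and (F2) $q(c) \vdash p(c)$.
   Context: Regular logic is the fragment of many-sorted first-order logic whose judgements are sequents $\phi \vdash_X \psi$ where $\phi,\psi$ are built from atomic formulas using conjunction (including the empty conjunction $\top$) and existential quantification, and $X$ is a finite set of variables containing all free variables of $\phi,\psi$; the sequent means $\forall x_1\cdots\forall x_n[\phi \Rightarrow \psi]$ for $X=\{x_1,\dots,x_n\}$. $\vdash_X \psi$ abbreviates $\top \vdash_X \psi$, and $\phi \vdash \psi$ abbreviates $\phi \vdash_{\varnothing} \psi$. *)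

(* A deep embedding of regular logic (Johnstone, Elephant D1.3)
   over the two-sorted vocabulary  U_a, U_b, R_a : U_a x U_b, R_b : U_b x U_a,
   c : U_a, p ⊆ U_a  (with equality), using de Bruijn variables. *)
From Stdlib Require Import List Arith.
Import ListNotations.

Inductive sort : Type := Ua | Ub.

Inductive term : Type :=
| tvar : nat -> term
| tc : term.

Inductive form : Type :=
| FTop : form
| FAnd : form -> form -> form
| FEx : sort -> form -> form            (* binds de Bruijn index 0 of the given sort *)
| FEq : sort -> term -> term -> form
| FRa : term -> term -> form
| FRb : term -> term -> form
| FP : term -> form.

Definition wf_term (G : list sort) (t : term) (s : sort) : Prop :=
  match t with
  | tvar n => nth_error G n = Some s
  | tc => s = Ua
  end.

Fixpoint wf (G : list sort) (f : form) : Prop :=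
  match f with
  | FTop => True
  | FAnd a b => wf G a /\ wf G b
  | FEx s a => wf (s :: G) a
  | FEq s t u => wf_term G t s /\ wf_term G u s
  | FRa t u => wf_term G t Ua /\ wf_term G u Ub
  | FRb t u => wf_term G t Ub /\ wf_term G u Ua
  | FP t => wf_term G t Ua
  end.

Definition tshift (t : term) : term :=
  match t with tvar n => tvar (S n) | tc => tc end.

Definition subst_term (sg : nat -> term) (t : term) : term :=
  match t with tvar n => sg n | tc => tc end.

Definition up (sg : nat -> term) : nat -> term :=
  fun n => match n with 0 => tvar 0 | S m => tshift (sg m) end.

Fixpoint subst (sg : nat -> term) (f : form) : form :=
  match f with
  | FTop => FTop
  | FAnd a b => FAnd (subst sg a) (subst sg b)
  | FEx s a => FEx s (subst (up sg) a)
  | FEq s t u => FEq s (subst_term sg t) (subst_term sg u)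
  | FRa t u => FRa (subst_term sg t) (subst_term sg u)
  | FRb t u => FRb (subst_term sg t) (subst_term sg u)
  | FP t => FP (subst_term sg t)
  end.

Definition shift (f : form) : form := subst (fun n => tvar (S n)) f.

Definition sub_ok (G : list sort) (sg : nat -> term) (D : list sort) : Prop :=
  forall n s, nth_error D n = Some s -> wf_term G (sg n) s.

Definition repl (i j : nat) : nat -> term :=
  fun k => if Nat.eqb k i then tvar j else tvar k.

Inductive der (ax : list sort -> form -> form -> Prop)
  : list sort -> form -> form -> Prop :=
| d_ax : forall G a b, ax G a b -> wf G a -> wf G b -> der ax G a b
| d_id : forall G a, wf G a -> der ax G a a
| d_cut : forall G a b c, der ax G a b -> der ax G b c -> der ax G a c
| d_subst : forall D G sg a b, sub_ok G sg D -> der ax D a b ->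
    der ax G (subst sg a) (subst sg b)
| d_eq_refl : forall G s i, nth_error G i = Some s ->
    der ax G FTop (FEq s (tvar i) (tvar i))
| d_eq_subst : forall G s i j a,
    nth_error G i = Some s -> nth_error G j = Some s -> wf G a ->
    der ax G (FAnd (FEq s (tvar i) (tvar j)) a) (subst (repl i j) a)
| d_top : forall G a, wf G a -> der ax G a FTop
| d_and_l : forall G a b, wf G a -> wf G b -> der ax G (FAnd a b) a
| d_and_r : forall G a b, wf G a -> wf G b -> der ax G (FAnd a b) b
| d_and_i : forall G a b c, der ax G a b -> der ax G a c -> der ax G a (FAnd b c)
(* existential rule (both directions of the double bar):
   phi |-_{G,y} psi  iff  (exists y. phi) |-_G psi, y not free in psi *)
| d_ex_i : forall G s a b, wf G b -> der ax (s :: G) a (shift b) -> der ax G (FEx s a) b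
| d_ex_e : forall G s a b, der ax G (FEx s a) b -> der ax (s :: G) a (shift b)
| d_frob : forall G s a b, wf G a -> wf (s :: G) b ->
    der ax G (FAnd a (FEx s b)) (FEx s (FAnd (shift a) b)).

(* The theory (A1)-(A3). Context [Ua; Ub]: x = tvar 0 : U_a, y = tvar 1 : U_b. *)
Inductive axA : list sort -> form -> form -> Prop :=
| A1 : axA [Ua; Ub] (FAnd (FRa tc (tvar 1)) (FRb (tvar 1) (tvar 0))) (FP (tvar 0))
| A2 : axA [Ua; Ub] (FAnd (FRa tc (tvar 1)) (FP (tvar 0))) (FRb (tvar 1) (tvar 0))
| A3 : axA [] FTop (FEx Ub (FRa tc (tvar 0))).

(* q(x) = exists y. R_a(x,y) /\ R_b(y,x), with x := c *)
Definition q_c : form := FEx Ub (FAnd (FRa tc (tvar 0)) (FRb (tvar 0) tc)).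

(* Since (A3) provides a witness y with R_a(c,y), Frobenius turns p(c) into
   ∃y. p(c) ∧ R_a(c,y); under that y, (A2) at x := c yields R_b(y,c), which is
   exactly the body of q(c).  Conversely, a witness y of q(c) satisfies
   R_a(c,y) ∧ R_b(y,c), and (A1) at x := c gives p(c). *)
From Stdlib Require Import List.
Import ListNotations.

Section DerivedRules.

Variable ax : list sort -> form -> form -> Prop.

Lemma der_top_cut G a b : wf G a -> der ax G FTop b -> der ax G a b.
Proof. intros Ha Hb; apply d_cut with FTop; [apply d_top|]; assumption. Qed.

Lemma der_and_swap G a b : wf G a -> wf G b -> der ax G (FAnd a b) (FAnd b a).
Proof. intros Ha Hb; apply d_and_i; [apply d_and_r | apply d_and_l]; assumption. Qed.

Lemma der_ax_subst D G sg a b :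
  ax D a b -> wf D a -> wf D b -> sub_ok G sg D ->
  der ax G (subst sg a) (subst sg b).
Proof. intros Hab Ha Hb Hsg; apply d_subst with D; [|apply d_ax]; assumption. Qed.

Lemma der_ex_witness G s a : wf (s :: G) a -> der ax (s :: G) a (shift (FEx s a)).
Proof. intro Ha; apply d_ex_e, d_id; exact Ha. Qed.

Lemma der_and_ex G s a b :
  wf G a -> wf (s :: G) b -> der ax G FTop (FEx s b) ->
  der ax G a (FEx s (FAnd (shift a) b)).
Proof.
  intros Ha Hb Hex.
  apply d_cut with (FAnd a (FEx s b)).
  - apply d_and_i; [apply d_id | apply der_top_cut]; assumption.
  - apply d_frob; assumption.
Qed.

End DerivedRules.

(* In context [Ub], instantiate x := c and keep y as the only variable. *)
Definition inst_c : nat -> term := fun n => match n with 0 => tc | _ => tvar 0 end.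

Lemma inst_c_ok : sub_ok [Ub] inst_c [Ua; Ub].
Proof.
  intros [|[|n]] s H; simpl in *; try (injection H as <-; reflexivity).
  destruct n; discriminate.
Qed.

Theorem lemma3 : der axA nil (FP tc) q_c /\ der axA nil q_c (FP tc).
Proof.
  split.
  - apply d_cut with (FEx Ub (FAnd (shift (FP tc)) (FRa tc (tvar 0)))).
    + apply der_and_ex; simpl; auto.
      apply d_ax; [constructor | simpl; auto ..].
    + apply d_ex_i; [simpl; auto |].
      apply d_cut with (FAnd (FRa tc (tvar 0)) (FRb (tvar 0) tc));
        [| apply (der_ex_witness axA [] Ub); simpl; auto].
      apply d_and_i; [apply d_and_r; simpl; auto |].
      apply d_cut with (FAnd (FRa tc (tvar 0)) (FP tc));
        [apply der_and_swap; simpl; auto |].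
      refine (der_ax_subst axA _ _ _ _ _ A2 _ _ inst_c_ok); repeat split.
  - apply d_ex_i; [simpl; auto |].
    refine (der_ax_subst axA _ _ _ _ _ A1 _ _ inst_c_ok); repeat split.
Qed.
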